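(* Let $\mathcal{D}=(V,\Phi)$ be a finite directed graph (arcs $\Phi\subseteq V\times V$) with adjacency matrix $M\in\{0,1\}^{V\times V}$ ($M_{vw}=1$ iff $(v,w)\in\Phi$). Let $\boldsymbol{\alpha}(t),\boldsymbol{\beta}(t)\in[0,+\infty)^V$ ($t\ge0$) be vector sequences such that $\boldsymbol{\alpha}(t)$ is non-decreasing in every component and $\boldsymbol{\beta}(t)$ is convergent, and let $\mathbf{r},\mathbf{s}\in(0,+\infty)^V$ with $r_v=s_v^{-1}$ for all $v\in V$. Set $W_{vw}=r_vM_{vw}s_w$. Define $\boldsymbol{\omega}(t),\boldsymbol{\eta}(t)\in\mathbb{R}^V$ by $\boldsymbol{\omega}(0)=\boldsymbol{\eta}(0)=\mathbf{1}$ and, for all $v\in V$, $t\ge0$, $$\omega_v(t+1)=\frac{1}{1+\alpha_v(t)+\sum_{w}W_{vw}(1-\omega_w(t))},\qquad \eta_v(t+1)=1+\beta_v(t)+\sum_w M_{vw}\,\omega_w(t)\,\eta_w(t).$$ If $\mathcal{D}$ is acyclic, then $\boldsymbol{\eta}(t)$ is convergent and $\boldsymbol{\omega}(t)$ is non-increasing in every component and convergent. Moreover, for each $v\in V$, $\lim_{t\to\infty}\omega_v(t)<1$ if and only if there exists $w$ reachable from $v$ such that the sequence $\alpha_w(t)$ is not identically zero.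
   Context: A path from $v$ to $w$ of length $l\ge0$ is a list $(u_0,\dots,u_l)$ with $u_0=v$, $u_l=w$ and $(u_{i-1},u_i)\in\Phi$; $w$ is reachable from $v$ if such a path of some length $l\ge0$ exists (so $v$ is reachable from itself). A strongly connected component is a maximal induced subdigraph in which every node is reachable from every other; it is trivial if it is a single node without a self-loop. $\mathcal{D}$ is acyclic if all its strongly connected components are trivial. *)

From HB Require Import structures.
From mathcomp Require Import all_boot all_order all_algebra.
From mathcomp Require Import all_classical all_reals all_analysis.
Set Implicit Arguments. Unset Strict Implicit. Unset Printing Implicit Defensive.
Import Order.TTheory GRing.Theory Num.Theory.
Local Open Scope ring_scope.

Section Digraph.
Variable V : finType.
Variable Phi : rel V.

Definition reachable (v w : V) : bool := connect Phi v w.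

Definition induced_rel (S : {set V}) : rel V :=
  fun a b => [&& a \in S, b \in S & Phi a b].

Definition strongly_connected_set (S : {set V}) : Prop :=
  S != finset.set0 /\ forall x y, x \in S -> y \in S -> connect (induced_rel S) x y.

Definition is_scc (S : {set V}) : Prop :=
  strongly_connected_set S /\
  forall T : {set V}, strongly_connected_set T -> S \subset T -> T = S.

Definition trivial_scc (S : {set V}) : Prop :=
  exists v, S = finset.set1 v /\ ~~ Phi v v.

Definition acyclic : Prop := forall S, is_scc S -> trivial_scc S.

Variable R : realType.

Definition adj (v w : V) : R := if Phi v w then 1 else 0.

Variables (alpha beta : nat -> V -> R) (r s : V -> R).

Definition Wmat (v w : V) : R := r v * adj v w * s w.

Fixpoint omegaseq (t : nat) : V -> R :=
  match t with
  | 0%N => fun _ => 1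
  | t'.+1 => fun v =>
      (1 + alpha t' v + \sum_(w : V) Wmat v w * (1 - omegaseq t' w))^-1
  end.

Fixpoint etaseq (t : nat) : V -> R :=
  match t with
  | 0%N => fun _ => 1
  | t'.+1 => fun v =>
      1 + beta t' v + \sum_(w : V) adj v w * omegaseq t' w * etaseq t' w
  end.

End Digraph.

(* An arc v -> w of an acyclic digraph strictly shrinks the set of descendants
   (otherwise v and w would share a nontrivial strong component), which gives
   well-founded induction along arcs.  The omega recursion needs no acyclicity:
   omega stays in (0, 1] and, alpha being nondecreasing, the denominators grow,
   so omega is nonincreasing and converges.  Moreover omega_v(t+1) < 1 exactly
   when alpha_v(t) > 0 or omega_w(t) < 1 for some successor w, so omega_v ever
   drops below 1 iff alpha is nonzero somewhere downstream of v; for a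
   nonincreasing sequence this is the same as its limit being < 1.  Finally
   eta_v(t+1) only involves beta_v and omega, eta at successors of v, so eta
   converges by the induction along arcs. *)

From HB Require Import structures.
From mathcomp Require Import all_boot all_order all_algebra.
From mathcomp Require Import all_classical all_reals all_analysis.
Import Order.TTheory GRing.Theory Num.Theory.
Import numFieldNormedType.Exports.
Local Open Scope classical_set_scope.
Local Open Scope ring_scope.

Set Implicit Arguments.
Unset Strict Implicit.
Unset Printing Implicit Defensive.

Section AcyclicInduction.
Variables (V : finType) (Phi : rel V).

Definition strong_component (v : V) : {set V} :=
  [set x | connect Phi v x && connect Phi x v].

Definition descendants (v : V) : {set V} := [set x | connect Phi v x].

Lemma connect_induced_sub (S : {set V}) x y :
  connect (induced_rel Phi S) x y -> connect Phi x y.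
Proof. by apply: connect_sub => a b /and3P[_ _ ab]; exact: connect1. Qed.

Lemma strong_component_path v x p :
  path Phi x p -> connect Phi v x -> connect Phi (last x p) v ->
  connect (induced_rel Phi (strong_component v)) x (last x p).
Proof.
elim: p x => [|y p IHp] x /=; first by rewrite connect0.
move=> /andP[xy py] vx lastv.
have vy : connect Phi v y := connect_trans vx (connect1 xy).
have yv : connect Phi y v.
  by apply: connect_trans lastv; apply/connectP; exists p.
apply: connect_trans (IHp y py vy lastv); apply: connect1.
by rewrite /induced_rel !inE vx vy yv xy (connect_trans (connect1 xy) yv).
Qed.

Lemma strong_component_connected v :
  strongly_connected_set Phi (strong_component v).
Proof.
split; first by apply/set0Pn; exists v; rewrite inE connect0.
move=> x y; rewrite !inE.
move=> /andP[vx /connectP[p px xv]] /andP[/connectP[q vq vy] yv].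
apply: (@connect_trans _ _ v).
- by rewrite {2}xv; apply: strong_component_path; rewrite -?xv ?connect0.
- by rewrite vy; apply: strong_component_path; rewrite -?vy ?connect0.
Qed.

Lemma strong_component_is_scc v : is_scc Phi (strong_component v).
Proof.
split=> [|T [_ T_conn] subT]; first exact: strong_component_connected.
have vT : v \in T by apply: (fintype.subsetP subT); rewrite inE connect0.
apply/setP => y; apply/idP/idP => [yT|]; last exact: (fintype.subsetP subT).
by rewrite inE !(connect_induced_sub (T_conn _ _ _ _)).
Qed.

Lemma acyclic_arc_not_connect_back v w :
  acyclic Phi -> Phi v w -> ~~ connect Phi w v.
Proof.
move=> acyc vw; apply/negP => wv.
have [u [Su not_uu]] := acyc _ (strong_component_is_scc v).
have: v \in strong_component v by rewrite inE connect0.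
have: w \in strong_component v by rewrite inE connect1 ?wv.
by rewrite Su !inE => /eqP wu /eqP vu; move: vw; rewrite wu vu (negbTE not_uu).
Qed.

Lemma acyclic_descendants_proper v w :
  acyclic Phi -> Phi v w -> descendants w \proper descendants v.
Proof.
move=> acyc vw; apply/fintype.properP; split.
  apply/fintype.subsetP => x; rewrite !inE.
  exact: connect_trans (connect1 vw).
by exists v; rewrite !inE ?connect0 ?acyclic_arc_not_connect_back.
Qed.

Lemma acyclic_ind (P : V -> Prop) :
  acyclic Phi -> (forall v, (forall w, Phi v w -> P w) -> P v) ->
  forall v, P v.
Proof.
move=> acyc IH v; have [n] := ubnP #|descendants v|.
elim: n v => // n IHn v; rewrite ltnS => dv_le_n.
apply: IH => w vw; apply: IHn.
exact: leq_trans (proper_card (acyclic_descendants_proper acyc vw)) dv_le_n.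
Qed.

End AcyclicInduction.

Section OmegaRecursion.
Variables (V : finType) (Phi : rel V) (R : realType).
Variables (alpha : nat -> V -> R) (r s : V -> R).
Hypothesis alpha_ge0 : forall t v, 0 <= alpha t v.
Hypotheses (r_gt0 : forall v, 0 < r v) (s_gt0 : forall v, 0 < s v).

Local Notation W := (Wmat Phi r s).
Local Notation omega := (omegaseq Phi alpha r s).

Definition omega_den (t : nat) (v : V) : R :=
  1 + alpha t v + \sum_w W v w * (1 - omega t w).

Lemma omegaS t v : omega t.+1 v = (omega_den t v)^-1.
Proof. by []. Qed.

Lemma Wmat_ge0 v w : 0 <= W v w.
Proof.
by rewrite /Wmat /adj; case: ifP; rewrite ?mulr1 ?mulr0 ?mul0r // mulr_ge0 ?ltW.
Qed.

Lemma omega_den_ge1 t v : 1 <= omega_den t v.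
Proof.
elim: t v => [|t IH] v;
  rewrite /omega_den -addrA lerDl addr_ge0 // sumr_ge0 // => w _;
  rewrite mulr_ge0 ?Wmat_ge0 // subr_ge0 //=.
by rewrite invf_le1 ?IH // (lt_le_trans ltr01 (IH w)).
Qed.

Lemma omega_den_gt0 t v : 0 < omega_den t v.
Proof. exact: lt_le_trans ltr01 (omega_den_ge1 t v). Qed.

Lemma omega_gt0 t v : 0 < omega t v.
Proof. by case: t => [|t]; rewrite ?ltr01 // omegaS invr_gt0 omega_den_gt0. Qed.

Lemma omega_le1 t v : omega t v <= 1.
Proof.
case: t => [|t]; rewrite ?lexx // omegaS.
by rewrite invf_le1 ?omega_den_ge1 ?omega_den_gt0.
Qed.

Lemma omega_nonincreasing v :
  (forall w, nondecreasing_seq (alpha ^~ w)) -> nonincreasing_seq (omega ^~ v).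
Proof.
move=> alpha_nd; apply/nonincreasing_seqP => t; elim: t v => [|t IH] v.
  exact: omega_le1.
rewrite !omegaS lef_pV2 ?posrE ?omega_den_gt0 // lerD ?lerD2l ?alpha_nd //.
by apply: ler_sum => w _; rewrite ler_wpM2l ?Wmat_ge0 // lerD2l lerN2 IH.
Qed.

Lemma omega_lt1S t v :
  omega t.+1 v < 1 <-> alpha t v != 0 \/ exists2 w, Phi v w & omega t w < 1.
Proof.
have summand_gt0 w : (0 < W v w * (1 - omega t w)) = Phi v w && (omega t w < 1).
  rewrite /Wmat /adj; case: (Phi v w) => /=; last by rewrite mulr0 !mul0r ltxx.
  by rewrite mulr1 pmulr_rgt0 ?subr_gt0 // mulr_gt0.
have summand_ge0 w : 0 <= W v w * (1 - omega t w).
  by rewrite mulr_ge0 ?Wmat_ge0 ?subr_ge0 ?omega_le1.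
have sum_ge0 : 0 <= \sum_w W v w * (1 - omega t w).
  by apply: sumr_ge0 => w _; exact: summand_ge0.
rewrite omegaS invf_lt1 ?omega_den_gt0 // /omega_den -addrA ltrDl lt_def.
rewrite addr_ge0 // andbT paddr_eq0 // negb_and psumr_neq0 => [|w _]; last first.
  exact: summand_ge0.
split=> [/orP[|/hasP[w _ /=]]|[|[w vw lt1]]]; [by left | | by move=> ->|].
- by rewrite summand_gt0 => /andP[vw lt1]; right; exists w.
- apply/orP; right; apply/hasP; exists w; first exact: mem_index_enum.
  by rewrite /= summand_gt0 vw.
Qed.

Lemma omega_lt1_iff_reachable v :
  (exists t, omega t v < 1) <->
  exists w, reachable Phi v w /\ exists t, alpha t w != 0.
Proof.
split=> [[t]|[w [/connectP[p vp ->] [t a0]]]].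
- elim: t v => [|t IH] v; first by rewrite ltxx.
  case/omega_lt1S => [a0|[w vw /IH[u [wu au]]]].
    by exists v; split; [exact: connect0 | exists t].
  by exists u; split => //; exact: connect_trans (connect1 vw) wu.
- elim: p v vp a0 => [|y p IH] x /= => [_ a0|/andP[xy /IH{}IH /IH[t' lt1]]].
    by exists t.+1; apply/omega_lt1S; left.
  by exists t'.+1; apply/omega_lt1S; right; exists y.
Qed.

Lemma omega_cvg v :
  (forall w, nondecreasing_seq (alpha ^~ w)) -> cvgn (omega ^~ v).
Proof.
move=> alpha_nd; apply: nonincreasing_is_cvgn; first exact: omega_nonincreasing.
by exists 0 => _ [t _ <-]; exact: ltW (omega_gt0 t v).
Qed.

End OmegaRecursion.

Lemma nonincreasing_cvgn_lt (R : realType) (u : R ^nat) (c : R) :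
  nonincreasing_seq u -> cvgn u -> limn u < c <-> exists n, u n < c.
Proof.
move=> u_ni u_cvg; split=> [lim_lt|[n un_lt]].
  by near \oo => n; exists n; near: n; exact: cvgr_lt _ u_cvg _ lim_lt.
exact: le_lt_trans (nonincreasing_cvgn_ge u_ni u_cvg n) un_lt.
Unshelve. all: by end_near. Qed.

Lemma is_cvgn_sum (R : realType) (I : Type) (r : seq I) (P : pred I)
    (u : I -> R ^nat) :
  (forall i, P i -> cvgn (u i)) -> cvgn (fun n => \sum_(i <- r | P i) u i n).
Proof.
move=> u_cvg; apply: (cvgP (\sum_(i <- r | P i) limn (u i))).
by apply: cvg_big => [|i /u_cvg]; first exact: add_continuous.
Qed.

Section EtaRecursion.
Variables (V : finType) (Phi : rel V) (R : realType).
Variables (alpha beta : nat -> V -> R) (r s : V -> R).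

Local Notation omega := (omegaseq Phi alpha r s).
Local Notation eta := (etaseq Phi alpha beta r s).

Lemma etaS t v :
  eta t.+1 v = 1 + beta t v + \sum_(w | Phi v w) omega t w * eta t w.
Proof.
rewrite /= [in RHS]big_mkcond; congr (_ + _); apply: eq_bigr => w _.
by rewrite /adj; case: ifP; rewrite ?mul1r ?mul0r.
Qed.

Lemma eta_cvg :
  acyclic Phi ->
  (forall w, cvgn (omega ^~ w)) -> (forall w, cvgn (beta ^~ w)) ->
  forall v, cvgn (eta ^~ v).
Proof.
move=> acyc omega_cvg beta_cvg; apply: (acyclic_ind acyc) => v eta_cvg_succ.
suff /cvg_ex[l]: cvgn (fun t => eta t.+1 v).
  by rewrite (cvg_shiftS (eta ^~ v)) => /cvgP.
under eq_fun do rewrite etaS.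
apply: is_cvgD; first by apply: is_cvgD; [exact: is_cvg_cst | exact: beta_cvg].
apply: is_cvgn_sum => w vw.
by apply: is_cvgM; [exact: omega_cvg | exact: eta_cvg_succ].
Qed.

End EtaRecursion.

Theorem lemma3 (V : finType) (Phi : rel V) (R : realType)
  (alpha beta : nat -> V -> R) (r s : V -> R)
  (alpha_ge0 : forall t v, 0 <= alpha t v)
  (beta_ge0 : forall t v, 0 <= beta t v)
  (alpha_nd : forall v, nondecreasing_seq (fun t => alpha t v))
  (beta_cvg : forall v, cvg ((fun t => beta t v) @ \oo))
  (r_gt0 : forall v, 0 < r v) (s_gt0 : forall v, 0 < s v)
  (rs : forall v, r v = (s v)^-1) :
  acyclic Phi ->
  (forall v, cvg ((fun t => etaseq Phi alpha beta r s t v) @ \oo)) /\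
  (forall v, nonincreasing_seq (fun t => omegaseq Phi alpha r s t v)) /\
  (forall v, cvg ((fun t => omegaseq Phi alpha r s t v) @ \oo)) /\
  (forall v, lim ((fun t => omegaseq Phi alpha r s t v) @ \oo) < 1 <->
             exists w, reachable Phi v w /\ exists t, alpha t w != 0).
Proof.
move=> acyc.
have omega_ni v : nonincreasing_seq (omegaseq Phi alpha r s ^~ v).
  exact: omega_nonincreasing.
have omega_cv v : cvgn (omegaseq Phi alpha r s ^~ v) by exact: omega_cvg.
split; first exact: eta_cvg.
split; first exact: omega_ni.
split=> [//|v].
apply: iff_trans (nonincreasing_cvgn_lt _ (omega_ni v) (omega_cv v)) _.
exact: omega_lt1_iff_reachable.
Qed.
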